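(* Let $\mathfrak{A}$ be a $(\circ,\wedge,\mathsf{A})$-algebra that is representable by partial functions. If $\mathfrak{A}$ is atomic, then it is atomistic: every $a\in\mathfrak{A}$ is the join (in $\mathfrak{A}$) of the set of atoms $x$ with $x\le a$.
   Context: A $(\circ,\wedge,\mathsf{A})$-algebra is a set with two binary operations $\circ,\wedge$ and one unary operation $\mathsf{A}$. An algebra of partial functions of this signature is a set of partial functions, with base $X$ the union of all their domains and ranges, closed under: composition $f\circ g=\{(x,z)\mid \exists y\,(x,y)\in f,(y,z)\in g\}$; intersection; antidomain $\mathsf{A}(f)=\{(x,x)\mid x\in X, x\notin\mathrm{dom}(f)\}$. A representation by partial functions is an isomorphism onto such an algebra. The order is $a\le b\iff a\wedge b=a$, with least element $0=\mathsf{A}(a)\circ a$. An atom is a minimal nonzero element; $\mathfrak{A}$ is atomic if every nonzero element is above an atom. *)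

Set Implicit Arguments.

Record CWAAlgebra := {
  carrier :> Type;
  comp : carrier -> carrier -> carrier;
  meet : carrier -> carrier -> carrier;
  antidom : carrier -> carrier
}.

Section Defs.
Variable T : CWAAlgebra.

Definition le (a b : T) : Prop := meet T a b = a.

(* least element 0 = A(a) o a *)
Definition zero_of (a : T) : T := comp T (antidom T a) a.

Definition is_atom (x : T) : Prop :=
  x <> zero_of x /\ forall y : T, le y x -> y = zero_of x \/ y = x.

Definition atomic : Prop :=
  forall a : T, a <> zero_of a -> exists x : T, is_atom x /\ le x a.

Definition is_join (S : T -> Prop) (a : T) : Prop :=
  (forall x, S x -> le x a) /\
  (forall b, (forall x, S x -> le x b) -> le a b).

Definition atomistic : Prop :=
  forall a : T, is_join (fun x => is_atom x /\ le x a) a.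
End Defs.

Definition rel (X : Type) := X -> X -> Prop.

Definition functional (X : Type) (f : rel X) : Prop :=
  forall x y z, f x y -> f x z -> y = z.

Definition rcomp (X : Type) (f g : rel X) : rel X :=
  fun x z => exists y, f x y /\ g y z.

Definition rmeet (X : Type) (f g : rel X) : rel X :=
  fun x y => f x y /\ g x y.

Definition rantidom (X : Type) (f : rel X) : rel X :=
  fun x y => x = y /\ ~ (exists z, f x z).

Definition rel_eq (X : Type) (f g : rel X) : Prop :=
  forall x y, f x y <-> g x y.

Definition representation (T : CWAAlgebra) (X : Type) (h : T -> rel X) : Prop :=
  (forall a, functional (h a)) /\
  (forall a b, rel_eq (h a) (h b) -> a = b) /\
  (forall a b, rel_eq (h (comp T a b)) (rcomp (h a) (h b))) /\
  (forall a b, rel_eq (h (meet T a b)) (rmeet (h a) (h b))) /\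
  (forall a, rel_eq (h (antidom T a)) (rantidom (h a))) /\
  (forall x : X, exists a y, h a x y \/ h a y x).

Definition representable_pf (T : CWAAlgebra) : Prop :=
  exists (X : Type) (h : T -> rel X), @representation T X h.

(* In a representation by partial functions the order is inclusion of graphs.
   If a is not below an upper bound b of the atoms under a, some pair (x, y)
   lies in a but not in b, and then A(a /\ b) o a (which, because the
   elements are functions, is exactly "a minus b") is nonzero.  An atom
   below it lies below a, hence below b, yet is disjoint from b. *)

From Stdlib Require Import Classical.

Set Implicit Arguments.

Section Representation.

Variables (T : CWAAlgebra) (X : Type) (h : T -> rel X).
Hypothesis h_rep : @representation T X h.

Lemma rep_functional (a : T) : functional (h a).
Proof. apply h_rep. Qed.

Lemma rep_inj (a b : T) : rel_eq (h a) (h b) -> a = b.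
Proof. apply h_rep. Qed.

Lemma rep_comp (a b : T) x z : h (comp T a b) x z <-> exists y, h a x y /\ h b y z.
Proof. apply h_rep. Qed.

Lemma rep_meet (a b : T) x y : h (meet T a b) x y <-> h a x y /\ h b x y.
Proof. apply h_rep. Qed.

Lemma rep_antidom (a : T) x y : h (antidom T a) x y <-> x = y /\ ~ (exists z, h a x z).
Proof. apply h_rep. Qed.

Lemma le_rep (a b : T) : le T a b <-> (forall x y, h a x y -> h b x y).
Proof.
  split.
  - intros Hab x y Hxy. unfold le in Hab. rewrite <- Hab, rep_meet in Hxy.
    apply Hxy.
  - intros Hsub. apply rep_inj. intros x y. rewrite rep_meet. intuition.
Qed.

Lemma rep_zero (a : T) x y : ~ h (zero_of T a) x y.
Proof.
  unfold zero_of. rewrite rep_comp.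
  intros [w [Hw Hay]]. apply rep_antidom in Hw as [<- Hdom]. eauto.
Qed.

Lemma rep_nonzero (a : T) : a <> zero_of T a -> exists x y, h a x y.
Proof.
  intros Ha. apply NNPP. intros Hempty. apply Ha, rep_inj.
  intros x y. split; intros Hxy.
  - exfalso. eauto.
  - exfalso. exact (rep_zero _ Hxy).
Qed.

Definition diff (a b : T) : T := comp T (antidom T (meet T a b)) a.

Lemma rep_diff (a b : T) x y : h (diff a b) x y <-> h a x y /\ ~ h b x y.
Proof.
  unfold diff. rewrite rep_comp. split.
  - intros [w [Hw Hay]]. apply rep_antidom in Hw as [<- Hdom].
    split; [exact Hay |]. intros Hby. apply Hdom. exists y. now apply rep_meet.
  - intros [Hay Hnby]. exists x. split; [| exact Hay].
    apply rep_antidom. split; [reflexivity |].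
    intros [z Hz]. apply rep_meet in Hz as [Haz Hbz].
    rewrite (rep_functional Hay Haz) in Hnby. contradiction.
Qed.

Lemma le_of_atoms_below (a b : T) :
  atomic T -> (forall t, is_atom T t -> le T t a -> le T t b) -> le T a b.
Proof.
  intros Hatomic Hatoms. apply le_rep. intros x y Hay.
  apply NNPP. intros Hnby.
  assert (Hxy : h (diff a b) x y) by (now apply rep_diff).
  assert (Hdiff : diff a b <> zero_of T (diff a b)).
  { intros E. rewrite E in Hxy. exact (rep_zero _ Hxy). }
  destruct (Hatomic _ Hdiff) as [t [Hatom Htdiff]].
  rewrite le_rep in Htdiff.
  assert (Hta : le T t a).
  { apply le_rep. intros u v Huv. apply (rep_diff a b), Htdiff, Huv. }
  pose proof (proj1 (le_rep t b) (Hatoms t Hatom Hta)) as Htb.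
  destruct (rep_nonzero (proj1 Hatom)) as [u [v Huv]].
  apply (proj1 (rep_diff a b u v) (Htdiff u v Huv)), Htb, Huv.
Qed.

End Representation.

Theorem mainTheorem14 (T : CWAAlgebra) :
  representable_pf T -> atomic T -> atomistic T.
Proof.
  intros [X [h h_rep]] Hatomic a. split.
  - intros t [_ Hta]. exact Hta.
  - intros b Hb. apply (le_of_atoms_below h_rep Hatomic).
    intros t Hatom Hta. apply Hb. now split.
Qed.
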